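(* Let $1\le j<k-1$ be integers. Consider the elections $F(j,k-1)$ and $F(j,k)$, whose voter sets are identified via their recursive construction (so both have the same voter set $N$, $|N|=2^j$). For each $v\in N$, let $A_v$ and $A'_v$ denote the ballot of $v$ in $F(j,k-1)$ and in $F(j,k)$, respectively. Then $|A'_v\setminus A_v|=1$, and the unique candidate in $A'_v\setminus A_v$ is a dummy candidate (an element of $\{d_1,d_2,\dots\}$).
   Context: Let $D_\ell=\{d_1,\dots,d_\ell\}$ be dummy candidates, with $D_0=\varnothing$ and $D_\ell\subseteq D_{\ell+1}$. Elections $F(j,k)$, for $1\le j<k$, with candidate set $D_{k-1}\cup\{a,b\}$ and committee size $k$, are defined recursively. $F(1,k)$ has two voters, voter 1 with ballot $D_{k-1}\cup\{a\}$ and voter 2 with ballot $D_{k-2}\cup\{b\}$. For $j>1$, take a copy of $F(j-1,k)$ with candidates $D_{k-1}\cup\{a_1,b_1\}$ and voter set $N_1$, and a copy of $F(j-1,k-1)$ with candidates $D_{k-2}\cup\{a_2,b_2\}$ and voter set $N_2$, disjoint from $N_1$; in every ballot of $N_1$ replace $a_1$ by $b$ and $b_1$ by $a$, in every ballot of $N_2$ replace $a_2$ by $a$ and $b_2$ by $b$; $F(j,k)$ has voters $N_1\cup N_2$ with these ballots. The identification of voters of $F(j,k-1)$ and $F(j,k)$ is the natural one: for $j=1$, voter 1 with voter 1 and voter 2 with voter 2; for $j>1$, the voters of the part $N_1$ (coming from $F(j-1,k-1)$ in $F(j,k-1)$, resp. from $F(j-1,k)$ in $F(j,k)$) are identified recursively,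 and likewise the voters of the part $N_2$ (coming from $F(j-1,k-2)$, resp. $F(j-1,k-1)$). *)

From mathcomp Require Import all_boot finmap.
Set Implicit Arguments. Unset Strict Implicit. Unset Printing Implicit Defensive.
Local Open Scope fset_scope.

(* Candidates: [inl i] is the dummy candidate d_i (i >= 1),
   [inr true] is candidate a, [inr false] is candidate b. *)
Definition cand := (nat + bool)%type.
Definition dummy (i : nat) : cand := inl i.
Definition ca : cand := inr true.
Definition cb : cand := inr false.

Definition Dset (l : nat) : {fset cand} := [fset dummy i | i in iota 1 l].

Definition swap_ab (x : cand) : cand :=
  match x with inl i => inl i | inr t => inr (~~ t) end.

Definition swap_ballot (A : {fset cand}) : {fset cand} := [fset swap_ab x | x in A].

(* An election is the list of ballots of its voters; voter = position in the
   list.  F(j,k) = (N_1 part: copy of F(j-1,k) with a,b exchanged)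
                   ++ (N_2 part: copy of F(j-1,k-1)). *)
Fixpoint F (j k : nat) : seq {fset cand} :=
  match j with
  | 0 => [::]
  | j'.+1 =>
    match j' with
    | 0 => [:: Dset (k - 1) `|` [fset ca]; Dset (k - 2) `|` [fset cb]]
    | _ => map swap_ballot (F j' k) ++ F j' (k - 1)
    end
  end.

From mathcomp Require Import all_boot finmap zify.
Local Open Scope fset_scope.

(* In F(1,k) and F(1,k-1) each voter's ballot differs only by
   the top dummy of its D_l.  For j > 1, the N_2 voters compare F(j-1,k-1) with
   F(j-1,k-2), which is the induction hypothesis at k-1, and the N_1 voters
   compare the a/b-swapped copies of F(j-1,k) and F(j-1,k-1): swapping is a
   bijection, so it commutes with set difference, and it fixes dummies. *)

Lemma in_Dset x l :
  (x \in Dset l) = if x is inl i then 0 < i <= l else false.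
Proof.
apply/imfsetP/idP => [[i /= + ->]|]; first by rewrite mem_iota /dummy; lia.
by case: x => // i il; exists i; rewrite //= mem_iota; lia.
Qed.

Lemma DsetSUD l t :
  (Dset l.+1 `|` [fset inr t]) `\` (Dset l `|` [fset inr t]) = [fset dummy l.+1].
Proof.
apply/fsetP => -[i|u]; rewrite !inE !in_Dset /dummy; last by rewrite andNb.
by rewrite !orbF; apply/idP/eqP => [?|[->]]; [congr inl|]; lia.
Qed.

Lemma swap_abK : involutive swap_ab.
Proof. by case=> // -[]. Qed.

Lemma in_swap_ballot x A : (x \in swap_ballot A) = (swap_ab x \in A).
Proof.
apply/imfsetP/idP => [[y /= yA ->]|xA]; first by rewrite swap_abK.
by exists (swap_ab x); rewrite ?swap_abK.
Qed.

Lemma swap_ballotD A B :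
  swap_ballot A `\` swap_ballot B = swap_ballot (A `\` B).
Proof. by apply/fsetP => x; rewrite !(inE, in_swap_ballot). Qed.

Lemma swap_ballot_dummy i : swap_ballot [fset dummy i] = [fset dummy i].
Proof. exact: imfset_fset1. Qed.

Lemma FSS j k : F j.+2 k = map swap_ballot (F j.+1 k) ++ F j.+1 (k - 1).
Proof. by []. Qed.

Lemma size_F j k : 0 < j -> size (F j k) = 2 ^ j.
Proof.
case: j => // j _; elim: j k => [//|j IH] k.
by rewrite FSS size_cat size_map !IH addnn -mul2n -expnS.
Qed.

Lemma F_ballotD j k v : 0 < j -> j < k - 1 -> v < 2 ^ j ->
  exists2 i, 0 < i &
    nth fset0 (F j k) v `\` nth fset0 (F j (k - 1)) v = [fset dummy i].
Proof.
case: j => // j _; elim: j k v => [|j IH] k v jk v_lt.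
  have [l ->] : exists l, k = l.+3 by exists (k - 3); lia.
  case: v v_lt => [|[|]] //= _; rewrite !subSS !subn0 DsetSUD.
    by exists l.+2.
  by exists l.+1.
rewrite !FSS !nth_cat !size_map !size_F //.
case: ltnP => [v_lt1 | v_ge1].
  rewrite !(nth_map fset0) ?size_F // swap_ballotD.
  have [i i_gt0 ->] := IH k v (ltnW jk) v_lt1.
  by rewrite swap_ballot_dummy; exists i.
by apply: IH; move: v_lt; rewrite expnS; lia.
Qed.

Theorem proposition10 (j k : nat) :
  1 <= j -> j < k - 1 ->
  size (F j (k - 1)) = 2 ^ j /\ size (F j k) = 2 ^ j /\
  forall v : nat, v < 2 ^ j ->
    let A := nth fset0 (F j (k - 1)) v in
    let A' := nth fset0 (F j k) v in
    #|` A' `\` A | = 1 /\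
    exists i : nat, 1 <= i /\ A' `\` A = [fset dummy i].
Proof.
move=> j_gt0 jk; rewrite !size_F //; do 2!split => //.
move=> v v_lt /=; have [i i_gt0 ->] := @F_ballotD j k v j_gt0 jk v_lt.
by rewrite cardfs1; split => //; exists i.
Qed.
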